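(* For every instance such that $|S_2|=2$ and $\pi_1+\pi_3+\pi_4-1=0$, we have $H^{PW''}\le \tfrac{100}{53}H^*$.
   Context: An instance consists of an integer $n\ge 1$ and growth rates $1=h(1)\ge h(2)\ge\cdots\ge h(n)>0$ of bamboos $b_1,\dots,b_n$. Bamboo Garden Trimming (discrete version): - All heights are $0$ initially. - On each day $t=1,2,\dots$ every bamboo $b_j$ grows by $h(j)$. - At the end of each day the gardener cuts exactly one bamboo $\sigma(t)\in\{1,\dots,n\}$ back to height $0$. The height of a schedule $\sigma:\mathbb{N}\to\{1,\dots,n\}$ is the supremum, over all days $t$ and all $j$, of the height of $b_j$ at the end of day $t$ just before the cut. $H^*$ denotes the infimum of this height over all schedules. Value of algorithm PW'': - Split $\{1,\dots,n\}$ into four sets: - $S_1=\{j: \tfrac23<h(j)\le 1\}$; - $S_2=\{j:\tfrac12<h(j)\le\tfrac23\}$; - $S_3=\{j: h(j)\le\tfrac12 \text{ and } \tfrac23 2^{-k}<h(j)\le 2^{-k}\text{ for some integer }k\ge1\}$; - $S_4=\{j: h(j)\le\tfrac12\text{ and } 2^{-(k+1)}<h(j)\le \tfrac23 2^{-k}\text{ for some integer }k\ge 1\}$. - Modified growths: $h''(j)=2^{-k}$ for $j\in S_3$ and $h''(j)=\tfrac23 2^{-k}$ for $j\in S_4$, with $k$ as in the definition of the set. - Let $\pi_1=|S_1|$, $sh_3=\sum_{j\in S_3}h''(j)$, $sh_4=\sum_{j\in S_4}h''(j)$, $\pi_3=\lfloor sh_3\rfloor$, $\pi_4=\lfloor sh_4\rfloor$,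 $f_3=sh_3-\pi_3$, $f_4=sh_4-\pi_4$. - Option (a): $\pi_R(a)=\lceil f_3+f_4\rceil$ and $z(a)=\pi_1+|S_2|+\pi_3+\pi_4+\pi_R(a)$. - Option (b): if $S_2=\emptyset$ put $z(b)=+\infty$. Otherwise let $h^*=\max_{j\in S_2}h(j)$ and $f_2=\tfrac12$ if $|S_2|$ is odd, $f_2=0$ if $|S_2|$ is even. Then $\pi_R(b)=\lceil f_2+f_3+f_4\rceil$ and $z(b)=2h^*\,(\pi_1+\lfloor |S_2|/2\rfloor+\pi_3+\pi_4+\pi_R(b))$. - The value returned by algorithm PW'' is $H^{PW''}=\min\{z(a),z(b)\}$. The paper takes this as the maximum height of the periodic pinwheel trimming schedule that it builds from these partitions. *)

From Stdlib Require Import Reals Lra Lia ZArith Arith.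
Open Scope R_scope.

(* Bamboos are indexed 1..n; growth rates are h : nat -> R (values outside
   1..n are irrelevant). *)

Definition instance (n : nat) (h : nat -> R) : Prop :=
  (1 <= n)%nat /\ h 1%nat = 1 /\
  (forall j, (1 <= j)%nat -> (j < n)%nat -> h (S j) <= h j) /\
  (forall j, (1 <= j <= n)%nat -> 0 < h j).

(* A schedule: on day t (t >= 1) bamboo sigma t in {1..n} is cut. *)
Definition schedule (n : nat) (sigma : nat -> nat) : Prop :=
  forall t, (1 <= t)%nat -> (1 <= sigma t <= n)%nat.

Fixpoint height_after (h : nat -> R) (sigma : nat -> nat) (j t : nat) : R :=
  match t with
  | O => 0
  | S t' => if Nat.eq_dec (sigma (S t')) j then 0
            else height_after h sigma j t' + h j
  end.

Definition height_before (h : nat -> R) (sigma : nat -> nat) (j t : nat) : R :=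
  height_after h sigma j (Nat.pred t) + h j.

Definition heights (n : nat) (h : nat -> R) (sigma : nat -> nat) (x : R) : Prop :=
  exists t j, (1 <= t)%nat /\ (1 <= j <= n)%nat /\ x = height_before h sigma j t.

(* Schedules with unbounded heights have height +infinity
   and do not affect the infimum (round robin has finite height). *)
Definition schedule_heights (n : nat) (h : nat -> R) (r : R) : Prop :=
  exists sigma, schedule n sigma /\ is_lub (heights n h sigma) r.

Definition is_lower_bound (E : R -> Prop) (m : R) : Prop :=
  forall x, E x -> m <= x.

Definition is_glb (E : R -> Prop) (m : R) : Prop :=
  is_lower_bound E m /\ (forall b, is_lower_bound E b -> b <= m).

(* H* is the r with is_glb (schedule_heights n h) r. *)

Fixpoint sum1n (n : nat) (F : nat -> R) : R :=
  match n with
  | O => 0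
  | S m => sum1n m F + F (S m)
  end.

(* max_{j=1}^{n, P j} F j, with value 0 on an empty range *)
Fixpoint max1n (n : nat) (P : nat -> bool) (F : nat -> R) : R :=
  match n with
  | O => 0
  | S m => if P (S m) then Rmax (max1n m P F) (F (S m)) else max1n m P F
  end.

Definition floorZ (x : R) : Z := Int_part x.
Definition ceilZ (x : R) : Z := (- Int_part (- x))%Z.

(* for 0 < x <= 1/2 : the integer k >= 1 with 2^-(k+1) < x <= 2^-k,
   i.e. k = floor(log2 (1/x)) *)
Definition kidx (x : R) : nat := Z.to_nat (floorZ (- ln x / ln 2)).

Definition bR (b : bool) : R := if b then 1 else 0.
Definition Rltb (x y : R) : bool := if Rlt_dec x y then true else false.
Definition Rleb (x y : R) : bool := if Rle_dec x y then true else false.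

Definition inS1 (h : nat -> R) (j : nat) : bool := Rltb (2/3) (h j).
Definition inS2 (h : nat -> R) (j : nat) : bool :=
  Rltb (1/2) (h j) && Rleb (h j) (2/3).
Definition inS3 (h : nat -> R) (j : nat) : bool :=
  Rleb (h j) (1/2) && Rltb (2/3 * (/2) ^ kidx (h j)) (h j).
Definition inS4 (h : nat -> R) (j : nat) : bool :=
  Rleb (h j) (1/2) && Rleb (h j) (2/3 * (/2) ^ kidx (h j)).

Definition hmod3 (h : nat -> R) (j : nat) : R := (/2) ^ kidx (h j).
Definition hmod4 (h : nat -> R) (j : nat) : R := 2/3 * (/2) ^ kidx (h j).

Definition pi1 (n : nat) (h : nat -> R) : R := sum1n n (fun j => bR (inS1 h j)).
Definition card2 (n : nat) (h : nat -> R) : nat :=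
  List.length (List.filter (inS2 h) (List.seq 1 n)).
Definition sh3 (n : nat) (h : nat -> R) : R :=
  sum1n n (fun j => if inS3 h j then hmod3 h j else 0).
Definition sh4 (n : nat) (h : nat -> R) : R :=
  sum1n n (fun j => if inS4 h j then hmod4 h j else 0).
Definition pi3 (n : nat) (h : nat -> R) : R := IZR (floorZ (sh3 n h)).
Definition pi4 (n : nat) (h : nat -> R) : R := IZR (floorZ (sh4 n h)).
Definition f3 (n : nat) (h : nat -> R) : R := sh3 n h - pi3 n h.
Definition f4 (n : nat) (h : nat -> R) : R := sh4 n h - pi4 n h.

Definition z_a (n : nat) (h : nat -> R) : R :=
  pi1 n h + INR (card2 n h) + pi3 n h + pi4 n h
  + IZR (ceilZ (f3 n h + f4 n h)).

Definition hstar (n : nat) (h : nat -> R) : R := max1n n (inS2 h) h.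
Definition f2 (n : nat) (h : nat -> R) : R :=
  if Nat.odd (card2 n h) then 1/2 else 0.

(* option (b), only meaningful when S_2 is nonempty *)
Definition z_b (n : nat) (h : nat -> R) : R :=
  2 * hstar n h *
  (pi1 n h + INR (Nat.div2 (card2 n h)) + pi3 n h + pi4 n h
   + IZR (ceilZ (f2 n h + f3 n h + f4 n h))).

Definition H_PW (n : nat) (h : nat -> R) : R :=
  if Nat.eqb (card2 n h) 0 then z_a n h else Rmin (z_a n h) (z_b n h).

(* The hypotheses force S_1 = {b_1} and sh_3, sh_4 < 1, so with
   x = sh_3 + sh_4 < 2 we get H^{PW''} = min(3 + z, 2 h^* (2 + z))
   with z = ceil x in {0,1,2}.  For the lower bound, a schedule of height r < 3
   must cut b_1 at least every other day; the bamboos b_j, j >= 2, therefore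
   receive at most half of the cuts, and each cut removes at most r of their
   total height, which grows by g = sum_{j>=2} h(j) per day.  Hence
   H^* >= min(3, 2g).  Finally g >= sum_{S_2} h + (2/3) sh_3 + (3/4) sh_4,
   since h'' overestimates h by a factor less than 3/2 on S_3 and 4/3 on S_4,
   and the ratio of the two bounds is at most 100/53 for each value of z. *)
From Stdlib Require Import Reals Lra Lia ZArith List.
Open Scope R_scope.

Lemma sum1n_le n F G :
  (forall j, (1 <= j <= n)%nat -> F j <= G j) -> sum1n n F <= sum1n n G.
Proof.
  induction n as [|n IH]; intros HFG; simpl; [lra|].
  assert (sum1n n F <= sum1n n G) by (apply IH; intros; apply HFG; lia).
  assert (F (S n) <= G (S n)) by (apply HFG; lia).
  lra.
Qed.

Lemma sum1n_plus n F G : sum1n n (fun j => F j + G j) = sum1n n F + sum1n n G.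
Proof. induction n as [|n IH]; simpl; [lra|]. rewrite IH. lra. Qed.

Lemma sum1n_minus n F G : sum1n n (fun j => F j - G j) = sum1n n F - sum1n n G.
Proof. induction n as [|n IH]; simpl; [lra|]. rewrite IH. lra. Qed.

Lemma sum1n_scal n c F : sum1n n (fun j => c * F j) = c * sum1n n F.
Proof. induction n as [|n IH]; simpl; [lra|]. rewrite IH. lra. Qed.

Lemma sum1n_const n c : sum1n n (fun _ => c) = INR n * c.
Proof. induction n as [|n IH]; cbn [sum1n]; [simpl; lra|]. rewrite IH, S_INR. lra. Qed.

Lemma sum1n_le_const n c F :
  (forall j, (1 <= j <= n)%nat -> F j <= c) -> sum1n n F <= INR n * c.
Proof. intros HF. rewrite <- sum1n_const. now apply sum1n_le. Qed.

Lemma sum1n_nonneg n F :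
  (forall j, (1 <= j <= n)%nat -> 0 <= F j) -> 0 <= sum1n n F.
Proof. intros HF. rewrite <- (Rmult_0_r (INR n)), <- sum1n_const. now apply sum1n_le. Qed.

Lemma sum1n_ge_first n F :
  (1 <= n)%nat -> (forall j, (1 <= j <= n)%nat -> 0 <= F j) -> F 1%nat <= sum1n n F.
Proof.
  induction n as [|[|n] IH]; intros Hn HF; [lia|simpl; lra|].
  assert (F 1%nat <= sum1n (S n) F) by (apply IH; [lia|intros; apply HF; lia]).
  assert (0 <= F (S (S n))) by (apply HF; lia).
  simpl in *; lra.
Qed.

Lemma sum1n_point n k X : (1 <= k)%nat ->
  sum1n n (fun j => if Nat.eq_dec j k then X else 0) = if Nat.leb k n then X else 0.
Proof.
  intros Hk. induction n as [|n IH]; cbn [sum1n].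
  - destruct (Nat.leb_spec k 0); [lia|reflexivity].
  - rewrite IH.
    destruct (Nat.eq_dec (S n) k), (Nat.leb_spec k n), (Nat.leb_spec k (S n));
      first [lia | lra].
Qed.

Lemma height_after_nonneg h sigma j t : 0 <= h j -> 0 <= height_after h sigma j t.
Proof.
  intros Hj. induction t as [|t IH]; simpl; [lra|].
  destruct (Nat.eq_dec (sigma (S t)) j); lra.
Qed.

Lemma height_uncut_two_days h sigma j u : 0 <= h j ->
  sigma (S u) <> j -> sigma (S (S u)) <> j ->
  3 * h j <= height_before h sigma j (S (S (S u))).
Proof.
  intros Hj H1 H2. unfold height_before; cbn [Nat.pred height_after].
  destruct (Nat.eq_dec (sigma (S (S u))) j); [contradiction|].
  destruct (Nat.eq_dec (sigma (S u)) j); [contradiction|].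
  pose proof (height_after_nonneg h sigma j u Hj). lra.
Qed.

Fixpoint days_not_cut (sigma : nat -> nat) (j0 T : nat) : R :=
  match T with
  | O => 0
  | S t => days_not_cut sigma j0 t + (if Nat.eq_dec (sigma (S t)) j0 then 0 else 1)
  end.

Definition rate_others (n : nat) (h : nat -> R) (j0 : nat) : R :=
  sum1n n (fun j => if Nat.eq_dec j j0 then 0 else h j).

Definition height_others (n : nat) (h : nat -> R) (sigma : nat -> nat) (j0 T : nat) : R :=
  sum1n n (fun j => if Nat.eq_dec j j0 then 0 else height_after h sigma j T).

Section Bounded_schedule.

Variables (n : nat) (h : nat -> R) (sigma : nat -> nat) (j0 : nat) (r : R).
Hypothesis h_nonneg : forall j, (1 <= j <= n)%nat -> 0 <= h j.
Hypothesis sigma_schedule : schedule n sigma.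
Hypothesis r_upper : is_upper_bound (heights n h sigma) r.
Hypothesis j0_range : (1 <= j0 <= n)%nat.
Hypothesis r_lt_three_h : r < 3 * h j0.

Lemma height_before_le j t : (1 <= j <= n)%nat -> height_after h sigma j t + h j <= r.
Proof. intros Hj. apply r_upper. exists (S t), j. repeat split; auto; lia. Qed.

Lemma r_nonneg : 0 <= r.
Proof.
  pose proof (height_before_le j0 0 j0_range). pose proof (h_nonneg j0 j0_range).
  simpl in *; lra.
Qed.

Lemma cut_every_other_day u : (1 <= u)%nat -> sigma u = j0 \/ sigma (S u) = j0.
Proof.
  intros Hu. destruct u as [|u]; [lia|].
  destruct (Nat.eq_dec (sigma (S u)) j0) as [|Hcut1]; auto.
  destruct (Nat.eq_dec (sigma (S (S u))) j0) as [|Hcut2]; auto.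
  pose proof (height_uncut_two_days h sigma j0 u (h_nonneg j0 j0_range) Hcut1 Hcut2).
  pose proof (height_before_le j0 (S (S u)) j0_range).
  unfold height_before in *; simpl Nat.pred in *. lra.
Qed.

Lemma days_not_cut_even m : days_not_cut sigma j0 (2 * m) <= INR m.
Proof.
  induction m as [|m IH]; [simpl; lra|].
  replace (2 * S m)%nat with (S (S (2 * m))) by lia.
  cbn [days_not_cut]. rewrite S_INR.
  destruct (cut_every_other_day (S (2 * m)) ltac:(lia)) as [E|E]; rewrite E;
    destruct (Nat.eq_dec j0 j0); try contradiction;
    destruct (Nat.eq_dec _ j0); lra.
Qed.

(* Growth adds rate_others to the total height of the other bamboos; a cut
   of one of them removes its height before the cut, which is at most r. *)
Lemma height_others_step T :
  height_others n h sigma j0 T + rate_others n h j0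
  - (if Nat.eq_dec (sigma (S T)) j0 then 0 else r)
  <= height_others n h sigma j0 (S T).
Proof.
  set (k := sigma (S T)).
  assert (Hk : (1 <= k <= n)%nat) by (apply sigma_schedule; lia).
  set (c := if Nat.eq_dec k j0 then 0 else r).
  assert (Hc : sum1n n (fun j => if Nat.eq_dec j k then c else 0) = c).
  { rewrite sum1n_point by lia. destruct (Nat.leb_spec k n); [reflexivity|lia]. }
  unfold height_others, rate_others. rewrite <- Hc, <- sum1n_plus, <- sum1n_minus.
  apply sum1n_le. intros j Hj. cbn [height_after]. fold k. unfold c.
  destruct (Nat.eq_dec j j0), (Nat.eq_dec k j), (Nat.eq_dec j k), (Nat.eq_dec k j0);
    subst; try congruence; try lra.
  pose proof (height_before_le k T Hk). lra.
Qed.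

Lemma height_others_nonneg T : 0 <= height_others n h sigma j0 T.
Proof.
  apply sum1n_nonneg. intros j Hj. destruct (Nat.eq_dec j j0); [lra|].
  exact (height_after_nonneg h sigma j T (h_nonneg j Hj)).
Qed.

Lemma height_others_le T : height_others n h sigma j0 T <= INR n * r.
Proof.
  apply sum1n_le_const. intros j Hj. destruct (Nat.eq_dec j j0); [apply r_nonneg|].
  pose proof (height_before_le j T Hj). pose proof (h_nonneg j Hj). lra.
Qed.

Lemma rate_others_linear_growth T :
  rate_others n h j0 * INR T <= r * days_not_cut sigma j0 T + height_others n h sigma j0 T.
Proof.
  induction T as [|T IH].
  - pose proof (height_others_nonneg 0). simpl. lra.
  - pose proof (height_others_step T). rewrite S_INR. cbn [days_not_cut].
    destruct (Nat.eq_dec (sigma (S T)) j0); lra.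
Qed.

(* Over 2m days at most m cuts go to the other bamboos, while their total
   height stays below n r; letting m grow gives the bound. *)
Lemma twice_rate_others_le : 2 * rate_others n h j0 <= r.
Proof.
  destruct (Rle_or_lt (2 * rate_others n h j0) r) as [Hle|Hlt]; [exact Hle|exfalso].
  destruct (INR_archimed (2 * rate_others n h j0 - r) (INR n * r) ltac:(lra)) as [m Hm].
  pose proof (rate_others_linear_growth (2 * m)) as Hacc.
  pose proof (height_others_le (2 * m)).
  assert (r * days_not_cut sigma j0 (2 * m) <= r * INR m)
    by (apply Rmult_le_compat_l; [apply r_nonneg|apply days_not_cut_even]).
  rewrite mult_INR in Hacc. simpl (INR 2) in Hacc. nra.
Qed.

End Bounded_schedule.

Lemma Hstar_ge_min n h Hstar : instance n h -> is_glb (schedule_heights n h) Hstar ->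
  Rmin 3 (2 * rate_others n h 1) <= Hstar.
Proof.
  intros (Hn & H1 & _ & Hpos) [_ Hglb]. apply Hglb.
  intros x (sigma & Hsch & Hub & _).
  destruct (Rlt_or_le x 3).
  - pose proof (twice_rate_others_le n h sigma 1 x ltac:(intros j Hj; left; auto)
                  Hsch Hub ltac:(lia) ltac:(lra)).
    pose proof (Rmin_r 3 (2 * rate_others n h 1)). lra.
  - pose proof (Rmin_l 3 (2 * rate_others n h 1)). lra.
Qed.

Lemma inS2_bounds h j : inS2 h j = true -> 1/2 < h j <= 2/3.
Proof.
  unfold inS2, Rltb, Rleb.
  destruct (Rlt_dec _ _), (Rle_dec _ _); simpl; intros; first [discriminate | lra].
Qed.

Lemma card2_S n h : card2 (S n) h = (card2 n h + if inS2 h (S n) then 1 else 0)%nat.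
Proof.
  unfold card2. rewrite seq_S, filter_app, length_app. simpl.
  destruct (inS2 h (S n)); simpl; lia.
Qed.

Definition sum_S2 (n : nat) (h : nat -> R) : R :=
  sum1n n (fun j => if inS2 h j then h j else 0).

Lemma sum_S2_ge_half_card n h : 1/2 * INR (card2 n h) <= sum_S2 n h.
Proof.
  induction n as [|n IH]; [unfold card2, sum_S2; simpl; lra|].
  rewrite card2_S. unfold sum_S2 in *; cbn [sum1n].
  destruct (inS2 h (S n)) eqn:E.
  - apply inS2_bounds in E. rewrite plus_INR. simpl (INR 1). lra.
  - rewrite Nat.add_0_r. lra.
Qed.

Lemma sum_S2_ge_hstar n h : hstar n h + 1/2 * INR (card2 n h) - 1/2 <= sum_S2 n h.
Proof.
  induction n as [|n IH]; [unfold card2, sum_S2, hstar; simpl; lra|].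
  pose proof (sum_S2_ge_half_card n h).
  rewrite card2_S. unfold sum_S2, hstar in *; cbn [sum1n max1n].
  destruct (inS2 h (S n)) eqn:E.
  - apply inS2_bounds in E. rewrite plus_INR. simpl (INR 1).
    unfold Rmax. destruct (Rle_dec _ _); lra.
  - rewrite Nat.add_0_r. lra.
Qed.

Lemma half_pow_succ_kidx_lt x : 0 < x -> x <= 1/2 -> (/2) ^ S (kidx x) < x.
Proof.
  intros Hx0 Hx.
  assert (Hln2 : 0 < ln 2) by (pose proof ln_lt_2; lra).
  assert (Hlnx : ln x <= - ln 2).
  { rewrite <- ln_Rinv by lra. destruct (Req_dec x (/2)) as [->|]; [lra|].
    left. apply ln_increasing; lra. }
  set (y := - ln x / ln 2).
  assert (Hy : 1 <= y) by (unfold y; apply (Rmult_le_reg_r (ln 2)); auto; field_simplify; lra).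
  assert (Hyln : y * ln 2 = - ln x) by (unfold y; field; lra).
  unfold kidx, floorZ. fold y.
  destruct (base_Int_part y) as [Hfl Hfl'].
  assert (Hm : (0 <= Int_part y)%Z) by (apply le_IZR; lra).
  apply ln_lt_inv; [apply pow_lt; lra|auto|].
  rewrite ln_pow, ln_Rinv, S_INR, INR_IZR_INZ, Z2Nat.id by (auto || lra).
  nra.
Qed.

(* b_1 lies in S_1, so it contributes to neither side. *)
Lemma rate_others_ge_weighted n h : instance n h ->
  sum_S2 n h + 2/3 * sh3 n h + 3/4 * sh4 n h <= rate_others n h 1.
Proof.
  intros (Hn & H1 & _ & Hpos).
  unfold sum_S2, sh3, sh4, rate_others. rewrite <- !sum1n_scal, <- !sum1n_plus.
  apply sum1n_le. intros j Hj. pose proof (Hpos j Hj) as Hp.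
  unfold inS2, inS3, inS4, hmod3, hmod4, Rltb, Rleb.
  destruct (Nat.eq_dec j 1) as [->|].
  - rewrite H1. repeat destruct (Rlt_dec _ _); repeat destruct (Rle_dec _ _); simpl; lra.
  - set (p := (/2) ^ kidx (h j)).
    assert (0 < p) by (apply pow_lt; lra).
    destruct (Rle_dec (h j) (1/2)) as [Hh|Hh].
    + pose proof (half_pow_succ_kidx_lt (h j) Hp Hh) as Hk. simpl in Hk. fold p in Hk.
      repeat destruct (Rlt_dec _ _); repeat destruct (Rle_dec _ _); simpl; lra.
    + repeat destruct (Rlt_dec _ _); repeat destruct (Rle_dec _ _); simpl; lra.
Qed.

Lemma pi1_ge_1 n h : instance n h -> 1 <= pi1 n h.
Proof.
  intros (Hn & H1 & _). unfold pi1.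
  replace 1 with (bR (inS1 h 1%nat))
    by (unfold inS1, Rltb, bR; rewrite H1; destruct (Rlt_dec _ _); lra).
  apply (sum1n_ge_first n (fun j => bR (inS1 h j))); auto.
  intros j _. unfold bR. destruct (inS1 h j); lra.
Qed.

Lemma sh3_nonneg n h : 0 <= sh3 n h.
Proof.
  apply sum1n_nonneg. intros j _. unfold hmod3.
  destruct (inS3 h j); [left; apply pow_lt|]; lra.
Qed.

Lemma sh4_nonneg n h : 0 <= sh4 n h.
Proof.
  apply sum1n_nonneg. intros j _. unfold hmod4.
  assert (0 < (/2) ^ kidx (h j)) by (apply pow_lt; lra).
  destruct (inS4 h j); lra.
Qed.

Lemma floorZ_nonneg x : 0 <= x -> 0 <= IZR (floorZ x).
Proof.
  intros Hx. unfold floorZ. destruct (base_Int_part x). apply IZR_le.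
  assert (-1 < Int_part x)%Z by (apply lt_IZR; lra). lia.
Qed.

Lemma floorZ_zero_lt_1 x : IZR (floorZ x) = 0 -> x < 1.
Proof. unfold floorZ. destruct (base_Int_part x). lra. Qed.

Lemma ceilZ_bounds x : x <= IZR (ceilZ x) < x + 1.
Proof. unfold ceilZ. rewrite opp_IZR. destruct (base_Int_part (- x)). lra. Qed.

Lemma H_PW_two_S2 n h : card2 n h = 2%nat ->
  pi1 n h = 1 -> pi3 n h = 0 -> pi4 n h = 0 ->
  H_PW n h = Rmin (3 + IZR (ceilZ (sh3 n h + sh4 n h)))
                  (2 * hstar n h * (2 + IZR (ceilZ (sh3 n h + sh4 n h)))).
Proof.
  intros Hc E1 E3 E4.
  assert (F3 : f3 n h = sh3 n h) by (unfold f3; lra).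
  assert (F4 : f4 n h = sh4 n h) by (unfold f4; lra).
  assert (F2 : f2 n h = 0) by (unfold f2; rewrite Hc; reflexivity).
  unfold H_PW, z_a, z_b. rewrite Hc, F2, F3, F4, E1, E3, E4, Rplus_0_l.
  simpl Nat.eqb; cbv iota. simpl (INR 2); simpl (INR (Nat.div2 2)).
  f_equal; lra.
Qed.

Lemma min_ratio_bound (x hs s g : R) (z : Z) :
  0 <= x < 2 -> x <= IZR z < x + 1 ->
  1 <= s -> hs + 1/2 <= s -> s + 2/3 * x <= g ->
  Rmin (3 + IZR z) (2 * hs * (2 + IZR z)) <= 100/53 * Rmin 3 (2 * g).
Proof.
  intros Hx Hz Hs1 Hs2 Hg.
  assert (Hz02 : (0 <= z < 3)%Z) by (split; [apply le_IZR|apply lt_IZR]; lra).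
  pose proof (Rmin_l (3 + IZR z) (2 * hs * (2 + IZR z))).
  pose proof (Rmin_r (3 + IZR z) (2 * hs * (2 + IZR z))).
  unfold Rmin at 2. destruct (Rle_dec 3 (2 * g)).
  - assert (IZR z <= 2) by (apply IZR_le; lia). lra.
  - assert (Hz3 : (z = 0 \/ z = 1 \/ z = 2)%Z) by lia.
    destruct Hz3 as [-> | [-> | ->]]; simpl IZR in *; lra.
Qed.

Theorem proposition6 (n : nat) (h : nat -> R) :
  instance n h ->
  card2 n h = 2%nat ->
  pi1 n h + pi3 n h + pi4 n h - 1 = 0 ->
  forall Hstar : R, is_glb (schedule_heights n h) Hstar ->
  H_PW n h <= 100 / 53 * Hstar.
Proof.
  intros Hinst Hc Hpi Hstar Hglb.
  pose proof (Hstar_ge_min n h Hstar Hinst Hglb) as Hlow.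
  pose proof (pi1_ge_1 n h Hinst).
  pose proof (floorZ_nonneg _ (sh3_nonneg n h)) as Hpi3.
  pose proof (floorZ_nonneg _ (sh4_nonneg n h)) as Hpi4.
  fold (pi3 n h) in Hpi3; fold (pi4 n h) in Hpi4.
  assert (E1 : pi1 n h = 1) by lra.
  assert (E3 : pi3 n h = 0) by lra.
  assert (E4 : pi4 n h = 0) by lra.
  pose proof (floorZ_zero_lt_1 _ E3). pose proof (floorZ_zero_lt_1 _ E4).
  pose proof (sh3_nonneg n h). pose proof (sh4_nonneg n h).
  pose proof (sum_S2_ge_half_card n h) as Hhalf.
  pose proof (sum_S2_ge_hstar n h) as Hhs.
  rewrite Hc in Hhalf, Hhs. simpl (INR 2) in Hhalf, Hhs.
  pose proof (rate_others_ge_weighted n h Hinst).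
  rewrite (H_PW_two_S2 n h Hc E1 E3 E4).
  eapply Rle_trans.
  - apply (min_ratio_bound (sh3 n h + sh4 n h) (hstar n h) (sum_S2 n h) (rate_others n h 1));
      [lra | apply ceilZ_bounds | lra | lra | lra].
  - lra.
Qed.
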